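(* Let $\mathcal F\subseteq 2^{[n]}$ and $K>0$. If $\lambda_{n-|F|}(\mathcal U(F))\le K$ for all $F\in\mathcal F$, then $\lambda_n(\mathcal F)\le K$.
   Context: For a family $\mathcal G$ of subsets of an $m$-element ground set, the Lubell mass is $\lambda_m(\mathcal G)=\sum_{G\in\mathcal G}\binom{m}{|G|}^{-1}$. For $F\in\mathcal F$, $\mathcal U(F)=\mathcal U_{\mathcal F}(F):=\{G\setminus F:\ G\in\mathcal F,\ F\subseteq G\}$, a family of subsets of the $(n-|F|)$-element set $[n]\setminus F$. *)

From HB Require Import structures.
From mathcomp Require Import all_boot all_order all_algebra.
Set Implicit Arguments. Unset Strict Implicit. Unset Printing Implicit Defensive.
Import Order.TTheory GRing.Theory Num.Theory.
Local Open Scope ring_scope.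

Definition lubell (R : realFieldType) (T : finType) (m : nat)
  (G : {set {set T}}) : R :=
  \sum_(A in G) (('C(m, #|A|))%:R)^-1.

(* U_F(F0) = { G \ F0 : G in F, F0 \subset G }, a family of subsets of
   the (n - |F0|)-element set [n] \ F0. *)
Definition upfam (T : finType) (Fam : {set {set T}}) (F0 : {set T})
  : {set {set T}} :=
  [set G :\: F0 | G in [set G in Fam | F0 \subset G]].

From HB Require Import structures.
From mathcomp Require Import all_boot all_order all_algebra.
From mathcomp Require Import ring.
Set Implicit Arguments.
Unset Strict Implicit.

Import Order.TTheory GRing.Theory Num.Theory.
Local Open Scope ring_scope.

(* Induction on the size m of the ground set S.  If the empty set is in F then
   U(empty) = F and there is nothing to prove.  Otherwise every member is
   nonempty and double counting pairs (i, G) with i in G gives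
   lambda_{m+1}(F) = 1/(m+1) sum_{i in S} lambda_m(U({i})); the families U({i})
   live on S \ {i} and satisfy the hypothesis again, because the upper family
   of G \ {i} in U({i}) is U(G). *)

Lemma setD1D1 (T : finType) (A B : {set T}) (x : T) :
  x \in B -> (A :\ x) :\: (B :\ x) = A :\: B.
Proof. by move=> xB; rewrite setDDl setD1K. Qed.

Lemma subsetD1D1 (T : finType) (A B : {set T}) (x : T) :
  x \in A -> x \in B -> (A :\ x \subset B :\ x) = (A \subset B).
Proof.
move=> xA xB; rewrite subsetD1 setD11 andbT.
by rewrite -{2}(setD1K xA) subUset sub1set xB.
Qed.

Lemma invr_binS (R : numFieldType) (m k : nat) : (k <= m)%N ->
  ('C(m.+1, k.+1)%:R)^-1 = (m.+1%:R)^-1 * k.+1%:R * ('C(m, k)%:R)^-1 :> R.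
Proof.
move=> km.
have Cm_neq0 : 'C(m, k)%:R != 0 :> R by rewrite pnatr_eq0 -lt0n bin_gt0.
have absorption : 'C(m.+1, k.+1)%:R = m.+1%:R * 'C(m, k)%:R / k.+1%:R :> R.
  by rewrite -natrM (mul_bin_diag m.+1 k) natrM mulrC mulKf ?pnatr_eq0.
by rewrite absorption; field; rewrite Cm_neq0 !nat1r !pnatr_eq0.
Qed.

Section UpperFamily.
Variable T : finType.
Implicit Types (Fam : {set {set T}}) (G S : {set T}).

Lemma upfam0 Fam : upfam Fam set0 = Fam.
Proof.
apply/setP=> X; apply/imsetP/idP => [[G]|XF].
  by rewrite inE setD0 => /andP[GF _] ->.
by exists X; rewrite ?inE ?XF ?sub0set ?setD0.
Qed.

Lemma upfam_upfam1 Fam (F0 : {set T}) (i : T) :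
  i \in F0 -> upfam (upfam Fam [set i]) (F0 :\ i) = upfam Fam F0.
Proof.
move=> iF0; apply/setP=> X; apply/imsetP/imsetP.
- case=> _ /[!inE] /andP[/imsetP[G /[!inE] /[!sub1set] /andP[GF iG] ->] sF0G] ->.
  exists G; last by rewrite setD1D1.
  by rewrite inE GF -(subsetD1D1 iF0 iG).
- case=> G /[!inE] /andP[GF sF0G] ->.
  have iG : i \in G by apply: (subsetP sF0G).
  exists (G :\ i); last by rewrite setD1D1.
  rewrite inE (subsetD1D1 iF0 iG) sF0G andbT.
  by apply/imsetP; exists G; rewrite // inE GF sub1set.
Qed.

Variable R : realFieldType.

Lemma lubell_upfam1 Fam (m : nat) (i : T) :
  lubell R m (upfam Fam [set i]) =
  \sum_(G in Fam | i \in G) ('C(m, #|G|.-1)%:R)^-1.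
Proof.
rewrite /lubell /upfam big_imset /=.
  apply: eq_big => [G|G]; first by rewrite inE sub1set.
  by rewrite inE sub1set => /andP[_ iG]; rewrite (cardsD1 i G) iG.
move=> G1 G2 /[!inE] /[!sub1set] /andP[_ iG1] /andP[_ iG2] eqD.
by rewrite -(setD1K iG1) -(setD1K iG2) eqD.
Qed.

Lemma lubell_double_count Fam S (m : nat) :
  #|S| = m.+1 -> {in Fam, forall G, G \subset S} -> set0 \notin Fam ->
  lubell R m.+1 Fam =
  (m.+1%:R)^-1 * \sum_(i in S) lubell R m (upfam Fam [set i]).
Proof.
move=> cardS subS Fam0.
under eq_bigr do rewrite lubell_upfam1 big_mkcondr.
rewrite exchange_big /lubell mulr_sumr; apply: eq_bigr => G GF.
rewrite -big_mkcondr.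
have sGS := subS G GF.
have /card_gt0P[j jG] : (0 < #|G|)%N.
  by rewrite card_gt0; apply: contraNneq Fam0 => <-.
rewrite (eq_bigl (mem G)) => [|i]; last first.
  by apply/andP/idP => [[]//|iG]; rewrite (subsetP sGS).
rewrite sumr_const (cardsD1 j G) jG add1n /= -[_^-1 *+ _]mulr_natl.
rewrite invr_binS ?mulrA //.
by have := subset_leq_card sGS; rewrite cardS (cardsD1 j G) jG add1n ltnS.
Qed.

Lemma lubell_le_of_upfam (K : R) : 0 <= K ->
  forall (m : nat) S Fam, #|S| = m -> {in Fam, forall G, G \subset S} ->
  (forall F0, F0 \in Fam -> lubell R (m - #|F0|)%N (upfam Fam F0) <= K) ->
  lubell R m Fam <= K.
Proof.
move=> K_ge0 m; elim: m => [|m IH] S Fam cardS subS bound;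
  (have [Fam0|Fam0] := boolP (set0 \in Fam);
   first by move: (bound _ Fam0); rewrite cards0 subn0 upfam0).
  have S0 : S = set0 by apply/eqP; rewrite -cards_eq0 cardS.
  rewrite /lubell big1 // => G GF.
  by move: (subS G GF) Fam0; rewrite S0 subset0 => /eqP<-; rewrite GF.
rewrite (lubell_double_count cardS subS Fam0).
have boundS i : i \in S -> lubell R m (upfam Fam [set i]) <= K.
  move=> iS; apply: (IH (S :\ i)).
  - by move: cardS; rewrite (cardsD1 i S) iS add1n => -[].
  - by move=> _ /imsetP[G /[!inE] /andP[GF _] ->]; apply/setSD/subS.
  - move=> _ /imsetP[F0 /[!inE] /[!sub1set] /andP[F0F iF0] ->].
    rewrite upfam_upfam1 //.
    by have := bound F0 F0F; rewrite (cardsD1 i F0) iF0 add1n subSS.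
apply: (@le_trans _ _ ((m.+1%:R)^-1 * \sum_(i in S) K)).
  by rewrite ler_wpM2l ?invr_ge0 ?ler0n //; apply: ler_sum.
by rewrite sumr_const cardS -[K *+ _]mulr_natl mulrA mulVf ?mul1r ?pnatr_eq0.
Qed.

End UpperFamily.

Theorem proposition2p2 (R : realFieldType) (n : nat)
  (Fam : {set {set 'I_n}}) (K : R) (HK : 0 < K) :
  (forall F0, F0 \in Fam -> lubell R (n - #|F0|)%N (upfam Fam F0) <= K) ->
  lubell R n Fam <= K.
Proof.
apply: (lubell_le_of_upfam (ltW HK) (S := [set: 'I_n])) => [|G _];
  by rewrite ?cardsT ?card_ord ?subsetT.
Qed.
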